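(* Let $c\in\mathbb{R}$ and let $\gamma:(c,\infty)\to\mathbb{R}$ be a three times differentiable function such that $$\gamma\ge0,\quad\gamma'\le0,\quad\gamma''\ge0,\quad\gamma'''\le0$$ on $(c,\infty)$. Then the function $f:(-e^{-c},e^{-c})^2\to\mathbb{R}$ given by $$f(x,y)=\begin{cases} -\gamma(\log\frac1x)\cdot(2y-x)-\gamma'(\log\frac1x)\cdot\frac{1}{2x}(x-y)(2x-y), & e^{-c}>x\ge|y|,\ x\ne0,\\ -\gamma(\log(-\frac1x))\cdot(2x-y)-\gamma'(\log(-\frac1x))\cdot\frac32(y-x), & -e^{-c}<x\le-|y|,\ x\ne0,\\ 0, & x=y=0,\\ f(y,x), & \text{in the remaining cases (i.e. } |y|>|x|), \end{cases}$$ is separately convex.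
   Context: A function $f$ defined on an open set $U\subset\mathbb{R}^2$ is called separately convex if it is convex on every line segment contained in $U$ that is parallel to a coordinate axis. *)

From Stdlib Require Import Reals Lra.
From Coquelicot Require Import Coquelicot.
Open Scope R_scope.

Definition separately_convex (U : R -> R -> Prop) (f : R -> R -> R) : Prop :=
  forall (p1 p2 q1 q2 : R),
    (p1 = q1 \/ p2 = q2) ->
    (forall t, 0 <= t <= 1 -> U (p1 + t * (q1 - p1)) (p2 + t * (q2 - p2))) ->
    forall t, 0 <= t <= 1 ->
      f (p1 + t * (q1 - p1)) (p2 + t * (q2 - p2))
        <= (1 - t) * f p1 p2 + t * f q1 q2.

Definition square (c : R) (x y : R) : Prop :=
  - exp (- c) < x < exp (- c) /\ - exp (- c) < y < exp (- c).

(* The formula for |y| <= |x| (cases 1, 2, 3 of the paper).  gamma1 stands for gamma'. *)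
Definition f_main (gamma gamma1 : R -> R) (x y : R) : R :=
  if Req_EM_T x 0 then 0
  else if Rlt_dec 0 x then
    - gamma (ln (1 / x)) * (2 * y - x)
    - gamma1 (ln (1 / x)) * (1 / (2 * x)) * (x - y) * (2 * x - y)
  else
    - gamma (ln (- (1 / x))) * (2 * x - y)
    - gamma1 (ln (- (1 / x))) * (3 / 2) * (y - x).

Definition f_fun (gamma gamma1 : R -> R) (x y : R) : R :=
  if Rle_dec (Rabs y) (Rabs x) then f_main gamma gamma1 x y
  else f_main gamma gamma1 y x.

From Stdlib Require Import Reals Lra.
From Coquelicot Require Import Coquelicot.
Open Scope R_scope.

(* Fix one coordinate a and look at the slice t |-> f(a,t) on (-e^{-c}, e^{-c}).
   For |t| >= |a| it is one of the two outer branches, whose second derivative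
   in t is a combination of -gamma', gamma'', -gamma''' (at log 1/|t|) with
   coefficients that are nonnegative exactly because |a| <= |t|; for |t| <= |a|
   it is the inner branch, a quadratic in t with leading coefficient
   -gamma'/(2a) >= 0 (a > 0) or an affine function (a < 0).  So each piece is
   convex, and the slice is convex as soon as the derivative jumps upwards at
   t = +-|a|, which is checked by evaluating both one-sided derivatives.  For
   a = 0 the two outer branches meet at the origin, where 0 is a subgradient.
   Convexity is handled throughout through the existence of a subgradient at
   every point, which glues well along pieces.  By the symmetry f(x,y) = f(y,x)
   vertical slices reduce to horizontal ones. *)

Definition subgradient_on (h D : R -> R) (J : R -> Prop) : Prop :=
  forall x y, J x -> J y -> h x + D x * (y - x) <= h y.

Definition is_interval (J : R -> Prop) : Prop :=
  forall x y z, J x -> J y -> x <= z <= y -> J z.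

Lemma is_interval_between (J : R -> Prop) x y z :
  is_interval J -> J x -> J y -> Rmin x y <= z <= Rmax x y -> J z.
Proof.
  intros HJ Hx Hy. unfold Rmin, Rmax.
  destruct (Rle_dec x y); intros; [apply (HJ x y) | apply (HJ y x)]; auto.
Qed.

Lemma subgradient_on_sub h D (J J' : R -> Prop) :
  (forall x, J' x -> J x) -> subgradient_on h D J -> subgradient_on h D J'.
Proof. intros HJ HS x y Hx Hy; apply HS; auto. Qed.

Lemma subgradient_on_ext h h' D (J : R -> Prop) :
  (forall x, J x -> h x = h' x) -> subgradient_on h D J -> subgradient_on h' D J.
Proof. intros He HS x y Hx Hy; rewrite <- (He x Hx), <- (He y Hy); auto. Qed.

Lemma subgradient_on_le h D (J : R -> Prop) x y :
  subgradient_on h D J -> J x -> J y -> x <= y -> D x <= D y.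
Proof.
  intros HS Hx Hy Hxy.
  pose proof (HS x y Hx Hy); pose proof (HS y x Hy Hx).
  destruct (Rle_lt_or_eq_dec x y Hxy) as [Hlt|<-]; nra.
Qed.

Lemma subgradient_on_convex h D (J : R -> Prop) x y t :
  subgradient_on h D J -> J x -> J y -> J (x + t * (y - x)) -> 0 <= t <= 1 ->
  h (x + t * (y - x)) <= (1 - t) * h x + t * h y.
Proof.
  intros HS Hx Hy Hz Ht. set (z := x + t * (y - x)) in *.
  pose proof (HS z x Hz Hx); pose proof (HS z y Hz Hy).
  assert (D z * ((1 - t) * (x - z) + t * (y - z)) = 0) by (unfold z; ring).
  nra.
Qed.

Lemma subgradient_on_glue h D1 D2 (J1 J2 : R -> Prop) w :
  J1 w -> J2 w -> (forall x, J1 x -> x <= w) -> (forall x, J2 x -> w <= x) ->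
  subgradient_on h D1 J1 -> subgradient_on h D2 J2 -> D1 w <= D2 w ->
  subgradient_on h (fun x => if Rle_dec x w then D1 x else D2 x)
    (fun x => J1 x \/ J2 x).
Proof.
  intros H1w H2w HJ1 HJ2 S1 S2 Hw x y [Hx|Hx] [Hy|Hy];
    destruct (Rle_dec x w) as [Hxw|Hxw].
  - auto.
  - pose proof (HJ1 x Hx); lra.
  - pose proof (HJ2 y Hy).
    pose proof (S1 x w Hx H1w); pose proof (S2 w y H2w Hy).
    pose proof (subgradient_on_le h D1 J1 x w S1 Hx H1w Hxw). nra.
  - pose proof (HJ1 x Hx); lra.
  - assert (x = w) by (pose proof (HJ2 x Hx); lra). subst x. auto.
  - pose proof (HJ1 y Hy).
    pose proof (S2 x w Hx H2w); pose proof (S1 w y H1w Hy).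
    pose proof (subgradient_on_le h D2 J2 w x S2 H2w Hx ltac:(lra)). nra.
  - assert (x = w) by (pose proof (HJ2 x Hx); lra). subst x.
    pose proof (HJ2 y Hy); pose proof (S2 w y H2w Hy). nra.
  - auto.
Qed.

Lemma subgradient_on_glue3 h D1 D2 D3 l u v r :
  l < u -> u <= v -> v < r ->
  subgradient_on h D1 (fun x => l < x <= u) ->
  subgradient_on h D2 (fun x => u <= x <= v) ->
  subgradient_on h D3 (fun x => v <= x < r) ->
  D1 u <= D2 u -> D2 v <= D3 v ->
  exists D, subgradient_on h D (fun x => l < x < r).
Proof.
  intros Hlu Huv Hvr S1 S2 S3 Hu Hv.
  assert (S12 := subgradient_on_glue h D1 D2
    (fun x => l < x <= u) (fun x => u <= x <= v) u
    ltac:(cbv beta; lra) ltac:(cbv beta; lra)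
    ltac:(intros; cbv beta in *; lra) ltac:(intros; cbv beta in *; lra)
    S1 S2 Hu).
  assert (S123 := subgradient_on_glue h _ D3
    (fun x => l < x <= u \/ u <= x <= v) (fun x => v <= x < r) v
    ltac:(cbv beta; lra) ltac:(cbv beta; lra)
    ltac:(intros; cbv beta in *; lra) ltac:(intros; cbv beta in *; lra)
    S12 S3).
  eexists. refine (subgradient_on_sub _ _ _ _ _ (S123 _)).
  - intros x Hx. cbv beta. lra.
  - destruct (Rle_dec v u); [|lra].
    replace v with u in * by lra. lra.
Qed.

Lemma subgradient_on_add_point h D (J : R -> Prop) w Dw :
  (forall x, J x -> x <> w) ->
  (forall x, J x -> h w + Dw * (x - w) <= h x /\ h x + D x * (w - x) <= h w) ->
  subgradient_on h D J ->
  subgradient_on h (fun x => if Req_EM_T x w then Dw else D x)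
    (fun x => x = w \/ J x).
Proof.
  intros Hne Hw HS x y [->|Hx] [->|Hy].
  - destruct (Req_EM_T w w); lra.
  - destruct (Req_EM_T w w); [apply Hw|]; tauto.
  - destruct (Req_EM_T x w); [exfalso; apply (Hne x); auto|]. apply Hw; auto.
  - destruct (Req_EM_T x w); [exfalso; apply (Hne x); auto|]. auto.
Qed.

Lemma MVT_between P dP x y :
  (forall z, Rmin x y <= z <= Rmax x y -> is_derive P z (dP z)) ->
  exists xi, Rmin x y <= xi <= Rmax x y /\ P y - P x = dP xi * (y - x).
Proof.
  intros Hd. apply MVT_gen.
  - intros z Hz. apply Hd. lra.
  - intros z Hz. apply continuity_pt_filterlim, (ex_derive_continuous P).
    eexists. apply Hd, Hz.
Qed.

Lemma derive_nondecreasing dP d2P (J : R -> Prop) x y :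
  is_interval J ->
  (forall z, J z -> is_derive dP z (d2P z)) -> (forall z, J z -> 0 <= d2P z) ->
  J x -> J y -> x <= y -> dP x <= dP y.
Proof.
  intros HJ Hd Hd2 Hx Hy Hxy.
  destruct (MVT_between dP d2P x y) as [xi [Hxi Heq]].
  { intros z Hz. apply Hd, (is_interval_between J x y); auto. }
  pose proof (Hd2 xi (is_interval_between J x y xi HJ Hx Hy Hxi)). nra.
Qed.

Lemma subgradient_on_of_derive2 P dP d2P (J : R -> Prop) :
  is_interval J ->
  (forall x, J x -> is_derive P x (dP x)) ->
  (forall x, J x -> is_derive dP x (d2P x)) -> (forall x, J x -> 0 <= d2P x) ->
  subgradient_on P dP J.
Proof.
  intros HJ Hd Hd' Hd2 x y Hx Hy.
  destruct (MVT_between P dP x y) as [xi [Hxi Heq]].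
  { intros z Hz. apply Hd, (is_interval_between J x y); auto. }
  assert (Jxi : J xi) by exact (is_interval_between J x y xi HJ Hx Hy Hxi).
  unfold Rmin, Rmax in Hxi. destruct (Rle_dec x y).
  - pose proof (derive_nondecreasing dP d2P J x xi HJ Hd' Hd2 Hx Jxi ltac:(lra)). nra.
  - pose proof (derive_nondecreasing dP d2P J xi x HJ Hd' Hd2 Jxi Hx ltac:(lra)). nra.
Qed.

Section Slices.

Variables (c : R) (g g1 g2 g3 : R -> R).
Hypothesis Hd1 : forall t, c < t -> is_derive g t (g1 t).
Hypothesis Hd2 : forall t, c < t -> is_derive g1 t (g2 t).
Hypothesis Hd3 : forall t, c < t -> is_derive g2 t (g3 t).
Hypothesis H0 : forall t, c < t -> 0 <= g t.
Hypothesis H1 : forall t, c < t -> g1 t <= 0.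
Hypothesis H2 : forall t, c < t -> 0 <= g2 t.
Hypothesis H3 : forall t, c < t -> g3 t <= 0.

(* The two formulas of f_main x y (x > 0, resp. x < 0), with log(1/|x|) written
   as -ln |x|; the dx/dxx/dy definitions are their partial derivatives. *)
Definition branch_pos x y :=
  - g (- ln x) * (2 * y - x) - g1 (- ln x) * (1 / (2 * x)) * (x - y) * (2 * x - y).
Definition dx_branch_pos x y :=
  g (- ln x) - g1 (- ln x) * (2 - 2 * y / x - y ^ 2 / (2 * x ^ 2))
  + g2 (- ln x) * (1 - 3 * y / (2 * x) + y ^ 2 / (2 * x ^ 2)).
Definition dxx_branch_pos x y :=
  (- g1 (- ln x) * (x + y) ^ 2 + g2 (- ln x) * (x - y) * (4 * x + 3 * y) / 2
   - g3 (- ln x) * (x - y) * (2 * x - y) / 2) / x ^ 3.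

Definition dy_branch_pos x y := -2 * g (- ln x) - g1 (- ln x) * (2 * y - 3 * x) / (2 * x).

Definition branch_neg x y :=
  - g (- ln (- x)) * (2 * x - y) - g1 (- ln (- x)) * (3 / 2) * (y - x).
Definition dx_branch_neg x y :=
  -2 * g (- ln (- x)) + g1 (- ln (- x)) * (7 / 2 - y / x)
  - 3 / 2 * g2 (- ln (- x)) * (1 - y / x).
Definition dxx_branch_neg x y :=
  (g1 (- ln (- x)) * (2 * x + y) - g2 (- ln (- x)) * (7 * x + y) / 2
   + 3 / 2 * g3 (- ln (- x)) * (x - y)) / x ^ 2.
Definition dy_branch_neg x := g (- ln (- x)) - 3 / 2 * g1 (- ln (- x)).

Local Notation E := (exp (- c)).

Lemma lt_opp_ln x : 0 < x < E -> c < - ln x.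
Proof.
  intros Hx. assert (Hln : ln x < ln (exp (- c))) by (apply ln_increasing; lra).
  rewrite ln_exp in Hln. lra.
Qed.

Lemma is_derive_branch_pos_x x y : 0 < x < E ->
  is_derive (fun x => branch_pos x y) x (dx_branch_pos x y).
Proof.
  intros Hx. pose proof (lt_opp_ln x Hx) as Hc.
  pose proof (Hd1 _ Hc) as D1; pose proof (Hd2 _ Hc) as D2.
  unfold branch_pos, dx_branch_pos. auto_derive.
  - repeat split; try nra; eexists; eassumption.
  - rewrite (is_derive_unique (fun t : R => g t) _ _ D1),
      (is_derive_unique (fun t : R => g1 t) _ _ D2).
    field. lra.
Qed.

Lemma is_derive_dx_branch_pos x y : 0 < x < E ->
  is_derive (fun x => dx_branch_pos x y) x (dxx_branch_pos x y).
Proof.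
  intros Hx. pose proof (lt_opp_ln x Hx) as Hc.
  pose proof (Hd1 _ Hc) as D1; pose proof (Hd2 _ Hc) as D2; pose proof (Hd3 _ Hc) as D3.
  unfold dx_branch_pos, dxx_branch_pos. auto_derive.
  - repeat split; try nra; eexists; eassumption.
  - rewrite (is_derive_unique (fun t : R => g t) _ _ D1),
      (is_derive_unique (fun t : R => g1 t) _ _ D2),
      (is_derive_unique (fun t : R => g2 t) _ _ D3).
    field. lra.
Qed.

Lemma is_derive_branch_neg_x x y : -E < x < 0 ->
  is_derive (fun x => branch_neg x y) x (dx_branch_neg x y).
Proof.
  intros Hx. assert (Hc : c < - ln (- x)) by (apply lt_opp_ln; lra).
  pose proof (Hd1 _ Hc) as D1; pose proof (Hd2 _ Hc) as D2.
  unfold branch_neg, dx_branch_neg. auto_derive.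
  - repeat split; try nra; eexists; eassumption.
  - rewrite (is_derive_unique (fun t : R => g t) _ _ D1),
      (is_derive_unique (fun t : R => g1 t) _ _ D2).
    field. lra.
Qed.

Lemma is_derive_dx_branch_neg x y : -E < x < 0 ->
  is_derive (fun x => dx_branch_neg x y) x (dxx_branch_neg x y).
Proof.
  intros Hx. assert (Hc : c < - ln (- x)) by (apply lt_opp_ln; lra).
  pose proof (Hd1 _ Hc) as D1; pose proof (Hd2 _ Hc) as D2; pose proof (Hd3 _ Hc) as D3.
  unfold dx_branch_neg, dxx_branch_neg. auto_derive.
  - repeat split; try nra; eexists; eassumption.
  - rewrite (is_derive_unique (fun t : R => g t) _ _ D1),
      (is_derive_unique (fun t : R => g1 t) _ _ D2),
      (is_derive_unique (fun t : R => g2 t) _ _ D3).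
    field. lra.
Qed.

Lemma dxx_branch_pos_ge0 x y : 0 < x < E -> Rabs y <= x -> 0 <= dxx_branch_pos x y.
Proof.
  intros Hx Hy. pose proof (lt_opp_ln x Hx) as Hc.
  pose proof (H1 _ Hc); pose proof (H2 _ Hc); pose proof (H3 _ Hc).
  apply Rabs_le_between in Hy.
  unfold dxx_branch_pos, Rdiv. apply Rmult_le_pos.
  - assert (0 <= (x - y) * (4 * x + 3 * y)) by (apply Rmult_le_pos; lra).
    assert (0 <= (x - y) * (2 * x - y)) by (apply Rmult_le_pos; lra).
    assert (0 <= (x + y) ^ 2) by apply pow2_ge_0.
    nra.
  - left. apply Rinv_0_lt_compat, pow_lt. lra.
Qed.

Lemma dxx_branch_neg_ge0 x y : -E < x < 0 -> Rabs y <= - x -> 0 <= dxx_branch_neg x y.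
Proof.
  intros Hx Hy. assert (Hc : c < - ln (- x)) by (apply lt_opp_ln; lra).
  pose proof (H1 _ Hc); pose proof (H2 _ Hc); pose proof (H3 _ Hc).
  apply Rabs_le_between in Hy.
  unfold dxx_branch_neg, Rdiv. apply Rmult_le_pos.
  - nra.
  - left. apply Rinv_0_lt_compat. nra.
Qed.

Lemma subgradient_branch_pos_x y (J : R -> Prop) :
  is_interval J -> (forall x, J x -> 0 < x < E /\ Rabs y <= x) ->
  subgradient_on (fun x => branch_pos x y) (fun x => dx_branch_pos x y) J.
Proof.
  intros HJ HJx. apply subgradient_on_of_derive2 with (fun x => dxx_branch_pos x y);
    auto; intros x Hx; destruct (HJx x Hx).
  - now apply is_derive_branch_pos_x.
  - now apply is_derive_dx_branch_pos.
  - now apply dxx_branch_pos_ge0.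
Qed.

Lemma subgradient_branch_neg_x y (J : R -> Prop) :
  is_interval J -> (forall x, J x -> -E < x < 0 /\ Rabs y <= - x) ->
  subgradient_on (fun x => branch_neg x y) (fun x => dx_branch_neg x y) J.
Proof.
  intros HJ HJx. apply subgradient_on_of_derive2 with (fun x => dxx_branch_neg x y);
    auto; intros x Hx; destruct (HJx x Hx).
  - now apply is_derive_branch_neg_x.
  - now apply is_derive_dx_branch_neg.
  - now apply dxx_branch_neg_ge0.
Qed.

Lemma subgradient_branch_pos_y x :
  0 < x < E -> subgradient_on (branch_pos x) (dy_branch_pos x) (fun _ => True).
Proof.
  intros Hx y z _ _. pose proof (H1 _ (lt_opp_ln x Hx)).
  assert (branch_pos x z - (branch_pos x y + dy_branch_pos x y * (z - y))
          = - g1 (- ln x) / (2 * x) * (z - y) ^ 2)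
    by (unfold branch_pos, dy_branch_pos; field; lra).
  assert (0 <= - g1 (- ln x) / (2 * x) * (z - y) ^ 2).
  { apply Rmult_le_pos; [apply Rdiv_le_0_compat; lra | apply pow2_ge_0]. }
  lra.
Qed.

Lemma subgradient_branch_neg_y x :
  subgradient_on (branch_neg x) (fun _ => dy_branch_neg x) (fun _ => True).
Proof. intros y z _ _. unfold branch_neg, dy_branch_neg. apply Req_le. ring. Qed.

Lemma f_main_pos x y : 0 < x -> f_main g g1 x y = branch_pos x y.
Proof.
  intros Hx. unfold f_main, branch_pos.
  destruct (Req_EM_T x 0); [lra|]. destruct (Rlt_dec 0 x); [|lra].
  replace (1 / x) with (/ x) by (field; lra). rewrite ln_Rinv by lra. ring.
Qed.

Lemma f_main_neg x y : x < 0 -> f_main g g1 x y = branch_neg x y.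
Proof.
  intros Hx. unfold f_main, branch_neg.
  destruct (Req_EM_T x 0); [lra|]. destruct (Rlt_dec 0 x); [lra|].
  replace (- (1 / x)) with (/ - x) by (field; lra). rewrite ln_Rinv by lra. ring.
Qed.

Lemma f_main_opp_diag x : x <> 0 -> f_main g g1 x (- x) = f_main g g1 (- x) x.
Proof.
  intros Hx. destruct (Rlt_dec 0 x).
  - rewrite f_main_pos, f_main_neg by lra. unfold branch_pos, branch_neg.
    rewrite Ropp_involutive. field. lra.
  - rewrite f_main_neg, f_main_pos by lra. unfold branch_pos, branch_neg.
    field. lra.
Qed.

Lemma f_fun_comm x y : f_fun g g1 x y = f_fun g g1 y x.
Proof.
  unfold f_fun.
  destruct (Rle_dec (Rabs y) (Rabs x)), (Rle_dec (Rabs x) (Rabs y)); auto; [|lra].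
  (* On the diagonals |x| = |y| both orders fall into f_main; they agree there. *)
  assert (Hxy : x = y \/ x = - y).
  { unfold Rabs in *. destruct (Rcase_abs x), (Rcase_abs y); lra. }
  destruct Hxy as [->| ->]; [reflexivity|].
  destruct (Req_dec y 0) as [->|Hy]; [now rewrite Ropp_0|].
  symmetry. now apply f_main_opp_diag.
Qed.

Lemma f_fun_outer a t : Rabs a <= Rabs t -> f_fun g g1 a t = f_main g g1 t a.
Proof.
  intros H. rewrite f_fun_comm. unfold f_fun.
  destruct (Rle_dec (Rabs a) (Rabs t)); [reflexivity | lra].
Qed.

Lemma f_fun_inner a t : Rabs t <= Rabs a -> f_fun g g1 a t = f_main g g1 a t.
Proof. intros H. unfold f_fun. destruct (Rle_dec (Rabs t) (Rabs a)); [reflexivity | lra]. Qed.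

Lemma subgradient_slice_right a (J : R -> Prop) :
  is_interval J -> (forall t, J t -> 0 < t < E /\ Rabs a <= t) ->
  subgradient_on (f_fun g g1 a) (fun t => dx_branch_pos t a) J.
Proof.
  intros HJ HJt. apply subgradient_on_ext with (fun t => branch_pos t a).
  - intros t Ht. destruct (HJt t Ht).
    rewrite f_fun_outer, f_main_pos by (try rewrite (Rabs_right t); lra). reflexivity.
  - now apply subgradient_branch_pos_x.
Qed.

Lemma subgradient_slice_left a (J : R -> Prop) :
  is_interval J -> (forall t, J t -> -E < t < 0 /\ Rabs a <= - t) ->
  subgradient_on (f_fun g g1 a) (fun t => dx_branch_neg t a) J.
Proof.
  intros HJ HJt. apply subgradient_on_ext with (fun t => branch_neg t a).
  - intros t Ht. destruct (HJt t Ht).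
    rewrite f_fun_outer, f_main_neg by (try rewrite (Rabs_left t); lra). reflexivity.
  - now apply subgradient_branch_neg_x.
Qed.

Lemma slice_subgradient_pos a :
  0 < a < E -> exists D, subgradient_on (f_fun g g1 a) D (fun t => -E < t < E).
Proof.
  intros Ha. pose proof (lt_opp_ln a Ha) as Hc.
  pose proof (H0 _ Hc); pose proof (H1 _ Hc); pose proof (H2 _ Hc).
  apply (subgradient_on_glue3 _ (fun t => dx_branch_neg t a) (dy_branch_pos a)
           (fun t => dx_branch_pos t a) (-E) (-a) a E); try lra.
  - apply subgradient_slice_left; [intros ? ? ? ? ? ?; lra|].
    intros t Ht. rewrite Rabs_right; lra.
  - apply subgradient_on_ext with (branch_pos a).
    + intros t Ht. rewrite f_fun_inner, f_main_pos; [reflexivity | lra |].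
      rewrite (Rabs_right a) by lra. now apply Rabs_le.
    + apply (subgradient_on_sub _ _ _ _ (fun _ _ => I)), subgradient_branch_pos_y, Ha.
  - apply subgradient_slice_right; [intros ? ? ? ? ? ?; lra|].
    intros t Ht. rewrite Rabs_right; lra.
  - replace (dx_branch_neg (- a) a) with (-2 * g (- ln a) + 9 / 2 * g1 (- ln a) - 3 * g2 (- ln a))
      by (unfold dx_branch_neg; rewrite Ropp_involutive; field; lra).
    replace (dy_branch_pos a (- a)) with (-2 * g (- ln a) + 5 / 2 * g1 (- ln a))
      by (unfold dy_branch_pos; field; lra).
    lra.
  - replace (dy_branch_pos a a) with (-2 * g (- ln a) + 1 / 2 * g1 (- ln a))
      by (unfold dy_branch_pos; field; lra).
    replace (dx_branch_pos a a) with (g (- ln a) + 1 / 2 * g1 (- ln a))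
      by (unfold dx_branch_pos; field; lra).
    lra.
Qed.

Lemma slice_subgradient_neg a :
  -E < a < 0 -> exists D, subgradient_on (f_fun g g1 a) D (fun t => -E < t < E).
Proof.
  intros Ha. assert (Hc : c < - ln (- a)) by (apply lt_opp_ln; lra).
  pose proof (H0 _ Hc); pose proof (H1 _ Hc); pose proof (H2 _ Hc).
  apply (subgradient_on_glue3 _ (fun t => dx_branch_neg t a) (fun _ => dy_branch_neg a)
           (fun t => dx_branch_pos t a) (-E) a (-a) E); try lra.
  - apply subgradient_slice_left; [intros ? ? ? ? ? ?; lra|].
    intros t Ht. rewrite Rabs_left; lra.
  - apply subgradient_on_ext with (branch_neg a).
    + intros t Ht. rewrite f_fun_inner, f_main_neg; [reflexivity | lra |].
      rewrite (Rabs_left a) by lra. apply Rabs_le; lra.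
    + apply (subgradient_on_sub _ _ _ _ (fun _ _ => I)), subgradient_branch_neg_y.
  - apply subgradient_slice_right; [intros ? ? ? ? ? ?; lra|].
    intros t Ht. rewrite Rabs_left; lra.
  - replace (dx_branch_neg a a) with (-2 * g (- ln (- a)) + 5 / 2 * g1 (- ln (- a)))
      by (unfold dx_branch_neg; field; lra).
    unfold dy_branch_neg. lra.
  - replace (dx_branch_pos (- a) a)
      with (g (- ln (- a)) - 7 / 2 * g1 (- ln (- a)) + 3 * g2 (- ln (- a)))
      by (unfold dx_branch_pos; field; lra).
    unfold dy_branch_neg. lra.
Qed.

Lemma f_fun_origin : f_fun g g1 0 0 = 0.
Proof.
  unfold f_fun, f_main.
  destruct (Rle_dec (Rabs 0) (Rabs 0)); destruct (Req_EM_T 0 0); lra.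
Qed.

Lemma slice_subgradient_zero :
  exists D, subgradient_on (f_fun g g1 0) D (fun t => -E < t < E).
Proof.
  assert (SL := subgradient_slice_left 0 (fun t => -E < t < 0)
    ltac:(intros ? ? ? ? ? ?; lra)
    ltac:(intros t Ht; rewrite Rabs_R0; lra)).
  assert (SR := subgradient_slice_right 0 (fun t => 0 < t < E)
    ltac:(intros ? ? ? ? ? ?; lra)
    ltac:(intros t Ht; rewrite Rabs_R0; lra)).
  apply (subgradient_on_add_point _ _ _ 0 0) in SL; [| intros; lra |].
  2:{ intros t Ht. assert (Hc : c < - ln (- t)) by (apply lt_opp_ln; lra).
      pose proof (H0 _ Hc); pose proof (H1 _ Hc); pose proof (H2 _ Hc).
      rewrite f_fun_origin, f_fun_outer, f_main_neg by (rewrite ?Rabs_R0; try apply Rabs_pos; lra).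
      replace (branch_neg t 0) with (t * (-2 * g (- ln (- t)) + 3 / 2 * g1 (- ln (- t))))
        by (unfold branch_neg; ring).
      replace (dx_branch_neg t 0)
        with (-2 * g (- ln (- t)) + 7 / 2 * g1 (- ln (- t)) - 3 / 2 * g2 (- ln (- t)))
        by (unfold dx_branch_neg; field; lra).
      split; nra. }
  apply (subgradient_on_add_point _ _ _ 0 0) in SR; [| intros; lra |].
  2:{ intros t Ht. pose proof (lt_opp_ln t Ht) as Hc.
      pose proof (H0 _ Hc); pose proof (H1 _ Hc); pose proof (H2 _ Hc).
      rewrite f_fun_origin, f_fun_outer, f_main_pos by (rewrite ?Rabs_R0; try apply Rabs_pos; lra).
      replace (branch_pos t 0) with (t * (g (- ln t) - g1 (- ln t)))
        by (unfold branch_pos; field; lra).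
      replace (dx_branch_pos t 0) with (g (- ln t) - 2 * g1 (- ln t) + g2 (- ln t))
        by (unfold dx_branch_pos; field; lra).
      split; nra. }
  eexists. refine (subgradient_on_sub _ _ _ _ _
    (subgradient_on_glue _ _ _ _ _ 0 (or_introl eq_refl) (or_introl eq_refl) _ _ SL SR _)).
  - intros x Hx. destruct (Rtotal_order x 0) as [|[|]]; [left|left|right]; lra.
  - intros x [->|Hx]; lra.
  - intros x [->|Hx]; lra.
  - destruct (Req_EM_T 0 0); lra.
Qed.

Lemma slice_subgradient a :
  -E < a < E -> exists D, subgradient_on (f_fun g g1 a) D (fun t => -E < t < E).
Proof.
  intros Ha. destruct (Rtotal_order a 0) as [Hneg|[->|Hpos]].
  - apply slice_subgradient_neg. lra.
  - exact slice_subgradient_zero.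
  - apply slice_subgradient_pos. lra.
Qed.

End Slices.

Theorem proposition8p1 (c : R) (gamma gamma1 gamma2 gamma3 : R -> R)
  (Hd1 : forall t, c < t -> is_derive gamma t (gamma1 t))
  (Hd2 : forall t, c < t -> is_derive gamma1 t (gamma2 t))
  (Hd3 : forall t, c < t -> is_derive gamma2 t (gamma3 t))
  (H0 : forall t, c < t -> 0 <= gamma t)
  (H1 : forall t, c < t -> gamma1 t <= 0)
  (H2 : forall t, c < t -> 0 <= gamma2 t)
  (H3 : forall t, c < t -> gamma3 t <= 0) :
  separately_convex (square c) (f_fun gamma gamma1).
Proof.
  intros p1 p2 q1 q2 Haxis Hseg t Ht.
  pose proof (slice_subgradient c gamma gamma1 gamma2 gamma3 Hd1 Hd2 Hd3 H0 H1 H2 H3)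
    as Hslice.
  assert (Hp := Hseg 0 ltac:(lra)); assert (Hq := Hseg 1 ltac:(lra));
    assert (Hz := Hseg t Ht).
  unfold square in Hp, Hq, Hz.
  rewrite !Rmult_0_l, !Rplus_0_r in Hp.
  replace (p1 + 1 * (q1 - p1)) with q1 in Hq by ring.
  replace (p2 + 1 * (q2 - p2)) with q2 in Hq by ring.
  destruct Haxis as [<- | <-].
  - replace (p1 + t * (p1 - p1)) with p1 in * by ring.
    destruct (Hslice p1) as [D HD]; [tauto|].
    apply (subgradient_on_convex _ D (fun y => - exp (- c) < y < exp (- c))); tauto.
  - replace (p2 + t * (p2 - p2)) with p2 in * by ring.
    rewrite !(f_fun_comm gamma gamma1 _ p2).
    destruct (Hslice p2) as [D HD]; [tauto|].
    apply (subgradient_on_convex _ D (fun y => - exp (- c) < y < exp (- c))); tauto.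
Qed.
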